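(* Let $(g,f)=(d_{n,k})_{n,k\ge 0}$ be a Riordan matrix possessing a type-I $B$-sequence $(b_j)_{j\ge 0}$, and let $A(t)$ and $B(t)=\sum_{j\ge0}b_jt^j$ be the generating functions of its $A$-sequence and of this $B$-sequence. Then $$f=t+tf\,B(tf),\qquad t=\bar f+t\bar f\,B(t\bar f),\qquad A(t)=1+t\,B\!\left(\frac{t^2}{A(t)}\right),$$ and these three formulas are equivalent to one another.
   Context: Let $K$ be $\mathbb{R}$ or $\mathbb{C}$. A (proper) Riordan matrix is a pair $(g,f)$ of formal power series in $K[[t]]$ with $g(0)=1$, $f(0)=0$, $f'(0)\neq 0$, identified with the infinite lower triangular matrix $(d_{n,k})_{n,k\ge0}$, $d_{n,k}=[t^n]g(t)f(t)^k$; we set $d_{n,k}=0$ if $n<0$, $k<0$ or $k>n$. $\bar f$ denotes the compositional inverse of $f$. The $A$-sequence $(a_j)_{j\ge0}$ of $(g,f)$ is the unique sequence whose generating function $A(t)=\sum_j a_jt^j$ satisfies $f(t)=tA(f(t))$ (equivalently $\bar f(t)=t/A(t)$). A type-I $B$-sequence of $(g,f)$ is a sequence $(b_j)_{j\ge0}$ such that $d_{n+1,k}=d_{n,k-1}+\sum_{j\ge0}b_j d_{n-j,k+j}$ for all $n\ge0$ and $k\ge1$. *)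

From HB Require Import structures.
From mathcomp Require Import all_boot all_order all_algebra.
Set Implicit Arguments. Unset Strict Implicit. Unset Printing Implicit Defensive.
Import Order.TTheory GRing.Theory Num.Theory.
Local Open Scope ring_scope.

Section FPS.
Variable K : fieldType.

(* a formal power series sum_n a n t^n *)
Definition fps := nat -> K.

Definition fps_one : fps := fun n => (n == 0%N)%:R.
Definition fps_X : fps := fun n => (n == 1%N)%:R.
Definition fps_add (a b : fps) : fps := fun n => a n + b n.
Definition fps_mul (a b : fps) : fps :=
  fun n => \sum_(i < n.+1) a i * b (n - i)%N.
Fixpoint fps_pow (a : fps) (k : nat) : fps :=
  if k is k'.+1 then fps_mul a (fps_pow a k') else fps_one.
(* composition a(g), meaningful when g 0 = 0 *)
Definition fps_comp (a g : fps) : fps :=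
  fun n => \sum_(k < n.+1) a k * fps_pow g k n.

(* multiplicative inverse of a series with nonzero constant term *)
Fixpoint fps_inv_seq (a : fps) (n : nat) : seq K :=
  if n is n'.+1 then
    let s := fps_inv_seq a n' in
    rcons s (- (a 0%N)^-1 * \sum_(1 <= i < n.+1) a i * nth 0 s (n - i)%N)
  else [:: (a 0%N)^-1].
Definition fps_inv (a : fps) : fps := fun n => nth 0 (fps_inv_seq a n) n.

Definition riordan (g f : fps) : Prop :=
  g 0%N = 1 /\ f 0%N = 0 /\ f 1%N != 0.

Definition rentry (g f : fps) (n k : nat) : K := fps_mul g (fps_pow f k) n.

Definition comp_inverse (f fbar : fps) : Prop :=
  fbar 0%N = 0 /\ fps_comp f fbar = fps_X /\ fps_comp fbar f = fps_X.

(* A is (the generating function of) the A-sequence of (g,f): f = t A(f) *)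
Definition A_seq (f A : fps) : Prop := f = fps_mul fps_X (fps_comp A f).

(* b is a type-I B-sequence of (g,f); terms d_{n-j,k+j} with j > n vanish *)
Definition typeI_Bseq (g f b : fps) : Prop :=
  forall n k : nat, (0 < k)%N ->
    rentry g f n.+1 k =
      rentry g f n k.-1 + \sum_(j < n.+1) b j * rentry g f (n - j)%N (k + j)%N.

End FPS.

(* Identities of formal power series are checked on polynomial truncations:
   the coefficients up to degree N of a sum, a product or a composition with a
   series without constant term only depend on the coefficients up to degree N
   of the operands, so the laws of {poly K} transfer to fps K.

   Composition with a series without constant term is a ring morphism, so
   substituting fbar into f = t + t f B(t f) gives t = fbar + t fbar B(t fbar),
   and substituting f gives it back. Substituting fbar into f = t A(f) gives
   fbar A = t, hence fbar = t / A, and the third formula is the second one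
   divided by fbar (which can be cancelled, as it divides t). Finally, the
   column k = 1 of the B-sequence recurrence reads
   [t^(n+1)] g f = [t^n] g + sum_j b_j [t^n] g f (t f)^j,
   that is g f = g (t + t f B(t f)), and g is invertible. *)

From HB Require Import structures.
From mathcomp Require Import all_boot all_order all_algebra.
From mathcomp Require Import zify.
From Stdlib Require Import FunctionalExtensionality.
Import GRing.Theory Num.Theory.
Set Implicit Arguments. Unset Strict Implicit. Unset Printing Implicit Defensive.
Local Open Scope ring_scope.

Lemma sum_ord_add0 (V : nmodType) m n (F : nat -> V) :
  (forall k, (m <= k)%N -> F k = 0) -> \sum_(k < m + n) F k = \sum_(k < m) F k.
Proof.
move=> F0; rewrite big_split_ord /= [X in _ + X]big1 ?addr0 // => k _.
exact/F0/leq_addr.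
Qed.

Lemma coef_exp_eq0 (R : nzRingType) (p : {poly R}) i j :
  p`_0 = 0 -> (i < j)%N -> (p ^+ j)`_i = 0.
Proof.
move=> p0; elim: j i => [//|j IHj] i lt_ij.
rewrite exprS coefM big1 // => -[[|k] lt_ki] _ /=; first by rewrite p0 mul0r.
by rewrite IHj ?mulr0 //; lia.
Qed.

Section FormalPowerSeries.
Variable K : fieldType.
Implicit Types (a b c g h u : fps K) (p q : {poly K}).

Definition approx N a p := forall i, (i <= N)%N -> p`_i = a i.

Definition trunc N a : {poly K} := \poly_(i < N.+1) a i.

Lemma approx_trunc N a : approx N a (trunc N a).
Proof. by move=> i le_iN; rewrite coef_poly ltnS le_iN. Qed.

Lemma approx_coef0 N a p : approx N a p -> p`_0 = a 0%N.
Proof. by apply. Qed.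

Lemma fps_approx_eq a b :
  (forall N, exists2 p, approx N a p & approx N b p) -> a = b.
Proof.
move=> ab; apply: functional_extensionality => n.
by have [p ap bp] := ab n; rewrite -ap // bp.
Qed.

Lemma approx_one N : approx N (fps_one K) 1.
Proof. by move=> i _; rewrite coef1. Qed.

Lemma approx_X N : approx N (fps_X K) 'X.
Proof. by move=> i _; rewrite coefX. Qed.

Lemma approx_add N a b p q :
  approx N a p -> approx N b q -> approx N (fps_add a b) (p + q).
Proof. by move=> ap bq i le_iN; rewrite coefD ap ?bq. Qed.

Lemma approx_mul N a b p q :
  approx N a p -> approx N b q -> approx N (fps_mul a b) (p * q).
Proof.
move=> ap bq i le_iN; rewrite coefM; apply: eq_bigr => j _.
have lt_ji := ltn_ord j; rewrite ap ?bq //; lia.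
Qed.

Lemma approx_exp N a p k : approx N a p -> approx N (fps_pow a k) (p ^+ k).
Proof.
move=> ap; elim: k => [|k IHk]; first exact: approx_one.
by rewrite exprS; apply: approx_mul.
Qed.

Lemma approx_comp N a g p q : g 0%N = 0 ->
  approx N a p -> approx N g q -> approx N (fps_comp a g) (p \Po q).
Proof.
move=> g0 ap gq i le_iN; have q0 : q`_0 = 0 by rewrite (approx_coef0 gq).
pose F j := p`_j * (q ^+ j)`_i.
have Fp0 k : (size p <= k)%N -> F k = 0.
  by move/(nth_default 0); rewrite /F => ->; rewrite mul0r.
have Fi0 k : (i.+1 <= k)%N -> F k = 0.
  by move=> lt_ik; rewrite /F coef_exp_eq0 ?mulr0.
rewrite coef_comp_poly -(sum_ord_add0 i.+1 Fp0) addnC (sum_ord_add0 _ Fi0).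
apply: eq_bigr => j _; have lt_ji := ltn_ord j.
rewrite /F ap ?(approx_exp j gq) //; lia.
Qed.

#[local] Hint Resolve approx_trunc approx_one approx_X approx_add approx_mul
  approx_exp approx_comp : approx.

Lemma fps_mulC a b : fps_mul a b = fps_mul b a.
Proof.
apply: fps_approx_eq => N; exists (trunc N a * trunc N b); last rewrite mulrC.
all: auto with approx.
Qed.

Lemma fps_mulA a b c : fps_mul a (fps_mul b c) = fps_mul (fps_mul a b) c.
Proof.
apply: fps_approx_eq => N; exists (trunc N a * (trunc N b * trunc N c)).
  by auto with approx.
by rewrite mulrA; auto with approx.
Qed.

Lemma fps_mulCA a b c : fps_mul a (fps_mul b c) = fps_mul b (fps_mul a c).
Proof. by rewrite !fps_mulA (fps_mulC a). Qed.

Lemma fps_mulDr a b c :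
  fps_mul a (fps_add b c) = fps_add (fps_mul a b) (fps_mul a c).
Proof.
apply: fps_approx_eq => N; exists (trunc N a * (trunc N b + trunc N c)).
  by auto with approx.
by rewrite mulrDr; auto with approx.
Qed.

Lemma fps_mulr1 a : fps_mul a (fps_one K) = a.
Proof.
apply: fps_approx_eq => N; exists (trunc N a * 1); last rewrite mulr1.
all: auto with approx.
Qed.

Lemma fps_mul1r a : fps_mul (fps_one K) a = a.
Proof. by rewrite fps_mulC fps_mulr1. Qed.

Lemma fps_powM a b j :
  fps_pow (fps_mul a b) j = fps_mul (fps_pow a j) (fps_pow b j).
Proof.
apply: fps_approx_eq => N; exists ((trunc N a * trunc N b) ^+ j).
  by auto with approx.
by rewrite exprMn; auto with approx.
Qed.

Lemma fps_powD a j k :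
  fps_pow a (j + k) = fps_mul (fps_pow a j) (fps_pow a k).
Proof.
apply: fps_approx_eq => N; exists (trunc N a ^+ (j + k)).
  by auto with approx.
by rewrite exprD; auto with approx.
Qed.

Lemma fps_mul_coef0 a b : fps_mul a b 0%N = a 0%N * b 0%N.
Proof. by rewrite /fps_mul big_ord1. Qed.

Lemma fps_comp_coef0 a g : fps_comp a g 0%N = a 0%N.
Proof. by rewrite /fps_comp big_ord1 /fps_one mulr1. Qed.

Lemma fps_compD a b h : h 0%N = 0 ->
  fps_comp (fps_add a b) h = fps_add (fps_comp a h) (fps_comp b h).
Proof.
move=> h0; apply: fps_approx_eq => N.
exists ((trunc N a + trunc N b) \Po trunc N h); last rewrite comp_polyD.
all: auto with approx.
Qed.

Lemma fps_compM a b h : h 0%N = 0 ->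
  fps_comp (fps_mul a b) h = fps_mul (fps_comp a h) (fps_comp b h).
Proof.
move=> h0; apply: fps_approx_eq => N.
exists ((trunc N a * trunc N b) \Po trunc N h); last rewrite comp_polyM.
all: auto with approx.
Qed.

Lemma fps_compX h : h 0%N = 0 -> fps_comp (fps_X K) h = h.
Proof.
move=> h0; apply: fps_approx_eq => N.
exists ('X \Po trunc N h); last rewrite comp_polyX.
all: auto with approx.
Qed.

Lemma fps_compXr a : fps_comp a (fps_X K) = a.
Proof.
have X0 : fps_X K 0%N = 0 by [].
apply: fps_approx_eq => N; exists (trunc N a \Po 'X); last rewrite comp_polyXr.
all: auto with approx.
Qed.

Lemma fps_compA a g h : g 0%N = 0 -> h 0%N = 0 ->
  fps_comp (fps_comp a g) h = fps_comp a (fps_comp g h).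
Proof.
move=> g0 h0; have gh0 : fps_comp g h 0%N = 0 by rewrite fps_comp_coef0.
apply: fps_approx_eq => N.
exists ((trunc N a \Po trunc N g) \Po trunc N h); last rewrite -comp_polyA.
all: auto with approx.
Qed.

Lemma trunc_comp N a q : trunc N a \Po q = \sum_(j < N.+1) a j *: q ^+ j.
Proof.
rewrite /trunc poly_def.
rewrite (big_morph _ (fun x y => @comp_polyD _ x y q) (@comp_poly0 _ q)).
by apply: eq_bigr => j _; rewrite comp_polyZ rmorphXn /= comp_polyX.
Qed.

Lemma coef_fps_mul_comp u b h n : h 0%N = 0 ->
  fps_mul u (fps_comp b h) n = \sum_(j < n.+1) b j * fps_mul u (fps_pow h j) n.
Proof.
move=> h0; rewrite -(approx_mul (@approx_trunc n u)
  (approx_comp h0 (@approx_trunc n b) (@approx_trunc n h))) //.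
rewrite trunc_comp mulr_sumr coef_sum; apply: eq_bigr => j _.
have tuh := approx_mul (@approx_trunc n u) (approx_exp j (@approx_trunc n h)).
by rewrite -scalerAr coefZ tuh.
Qed.

Lemma fps_mulX_coef0 a : fps_mul (fps_X K) a 0%N = 0.
Proof. by rewrite fps_mul_coef0 mul0r. Qed.

Lemma fps_mulX_coefS a n : fps_mul (fps_X K) a n.+1 = a n.
Proof.
rewrite -(approx_mul (@approx_X n.+1) (@approx_trunc n.+1 a)) // coefXM.
by rewrite approx_trunc.
Qed.

Lemma fps_mulXn_coef j a n : (j <= n)%N ->
  fps_mul (fps_pow (fps_X K) j) a n = a (n - j)%N.
Proof.
move=> le_jn.
rewrite -(approx_mul (approx_exp j (@approx_X n)) (@approx_trunc n a)) //.
by rewrite coefXnM ltnNge le_jn approx_trunc ?leq_subr.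
Qed.

Lemma fps_mulX_inj : injective (fps_mul (fps_X K)).
Proof.
move=> a b ab; apply: functional_extensionality => n.
by rewrite -fps_mulX_coefS ab fps_mulX_coefS.
Qed.

Lemma size_fps_inv_seq a n : size (fps_inv_seq a n) = n.+1.
Proof. by elim: n => [|n IHn] //=; rewrite size_rcons IHn. Qed.

Lemma nth_fps_inv_seq a n i :
  (i <= n)%N -> nth 0 (fps_inv_seq a n) i = fps_inv a i.
Proof.
elim: n => [|n IHn]; first by case: i.
rewrite leq_eqVlt => /orP [/eqP -> // | lt_in].
by rewrite /= nth_rcons size_fps_inv_seq lt_in IHn.
Qed.

Lemma fps_invS a n : fps_inv a n.+1 =
  - (a 0%N)^-1 * \sum_(i < n.+1) a i.+1 * fps_inv a (n - i)%N.
Proof.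
rewrite /fps_inv /= nth_rcons size_fps_inv_seq ltnn eqxx big_add1 big_mkord /=.
congr (_ * _); apply: eq_bigr => i _.
by rewrite subSS nth_fps_inv_seq ?leq_subr.
Qed.

Lemma fps_mulV a : a 0%N != 0 -> fps_mul a (fps_inv a) = fps_one K.
Proof.
move=> a0; apply: functional_extensionality => -[|n].
  by rewrite fps_mul_coef0 /fps_inv /= mulfV.
rewrite /fps_mul big_ord_recl fps_invS mulrA mulrN mulfV // mulN1r.
apply/eqP; rewrite addrC subr_eq0; apply/eqP.
by apply: eq_bigr => i _; rewrite subSS.
Qed.

Lemma fps_mulI a : a 0%N != 0 -> injective (fps_mul a).
Proof.
move=> a0 u v au_av.
rewrite -[u]fps_mul1r -[v]fps_mul1r -(fps_mulV a0) !(fps_mulC a).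
by rewrite -!fps_mulA au_av.
Qed.

Lemma fps_mul_inj_of_dvdX c d : fps_mul c d = fps_X K -> injective (fps_mul c).
Proof.
move=> cd u v cu_cv; apply: fps_mulX_inj.
by rewrite -cd -!fps_mulA (fps_mulCA c d u) (fps_mulCA c d v) cu_cv.
Qed.

End FormalPowerSeries.

Section Riordan.
Variable K : fieldType.
Implicit Types (g f fbar u v h A b B : fps K).

(* (u, v) = (f, t) gives the first formula, (u, v) = (t, fbar) the second. *)
Definition B_equation B u v :=
  u = fps_add v (fps_mul (fps_mul v u) (fps_comp B (fps_mul v u))).

Lemma B_equation_comp B u v h : v 0%N = 0 -> h 0%N = 0 ->
  B_equation B u v -> B_equation B (fps_comp u h) (fps_comp v h).
Proof.
move=> v0 h0 Buv.
have vu0 : fps_mul v u 0%N = 0 by rewrite fps_mul_coef0 v0 mul0r.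
by rewrite /B_equation {1}Buv fps_compD // !fps_compM // fps_compA // fps_compM.
Qed.

Lemma B_equation_comp_inverse B f fbar : f 0%N = 0 -> comp_inverse f fbar ->
  B_equation B f (fps_X K) <-> B_equation B (fps_X K) fbar.
Proof.
move=> f0 [fbar0 [f_fbar fbar_f]]; have X0 : fps_X K 0%N = 0 by [].
split=> [/(B_equation_comp X0 fbar0) | /(B_equation_comp fbar0 f0)].
  by rewrite f_fbar fps_compX //; apply.
by rewrite fbar_f fps_compX //; apply.
Qed.

Lemma A_seq_coef0 f A : A_seq f A -> A 0%N = f 1%N.
Proof. by move->; rewrite fps_mulX_coefS fps_comp_coef0. Qed.

Lemma A_seq_comp_inverse f fbar A : f 0%N = 0 -> comp_inverse f fbar ->
  A_seq f A -> fps_mul fbar A = fps_X K.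
Proof.
move=> f0 [fbar0 [f_fbar _]] fA.
rewrite -f_fbar {1}fA fps_compM // fps_compX // fps_compA //.
by rewrite f_fbar fps_compXr.
Qed.

Lemma B_equation_A_seq B f fbar A :
  f 0%N = 0 -> f 1%N != 0 -> comp_inverse f fbar -> A_seq f A ->
  B_equation B (fps_X K) fbar <->
  A = fps_add (fps_one K) (fps_mul (fps_X K)
        (fps_comp B (fps_mul (fps_mul (fps_X K) (fps_X K)) (fps_inv A)))).
Proof.
move=> f0 f1 f_fbar fA; have fbarA := A_seq_comp_inverse f0 f_fbar fA.
have A0 : A 0%N != 0 by rewrite (A_seq_coef0 fA).
have fbarE : fps_mul (fps_X K) (fps_inv A) = fbar.
  by rewrite -fbarA -fps_mulA fps_mulV // fps_mulr1.
rewrite -fps_mulA fbarE /B_equation (fps_mulC fbar); set C := fps_comp B _.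
have -> : fps_add fbar (fps_mul (fps_mul (fps_X K) fbar) C) =
          fps_mul fbar (fps_add (fps_one K) (fps_mul (fps_X K) C)).
  by rewrite fps_mulDr fps_mulr1 fps_mulCA fps_mulA.
by rewrite -{1}fbarA; split=> [/(fps_mul_inj_of_dvdX fbarA) | ->].
Qed.

Lemma rentry_diag g f n k j : (j <= n)%N -> rentry g f (n - j) (k + j) =
  fps_mul (fps_mul g (fps_pow f k)) (fps_pow (fps_mul (fps_X K) f) j) n.
Proof.
move=> le_jn; rewrite fps_powM fps_mulCA fps_mulXn_coef //.
by rewrite /rentry fps_powD fps_mulA.
Qed.

Lemma typeI_Bseq_B_equation g f b : g 0%N = 1 -> f 0%N = 0 ->
  typeI_Bseq g f b -> B_equation b f (fps_X K).
Proof.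
move=> g0 f0 gfb; have Xf0 := fps_mulX_coef0 f.
apply: (@fps_mulI _ g); first by rewrite g0 oner_neq0.
apply: functional_extensionality => -[|n].
  by rewrite !fps_mul_coef0 /fps_add /= !fps_mul_coef0 f0 !(mulr0, mul0r, addr0).
have := gfb n 1%N isT; rewrite {1 2}/rentry /= !fps_mulr1 => ->.
rewrite fps_mulDr /fps_add (fps_mulC g) fps_mulX_coefS; congr (_ + _).
rewrite !fps_mulA (fps_mulC g) -!fps_mulA fps_mulX_coefS !fps_mulA.
rewrite coef_fps_mul_comp //; apply: eq_bigr => j _.
by rewrite rentry_diag /= ?fps_mulr1 // -ltnS.
Qed.

End Riordan.

Theorem proposition2p1 (K : numFieldType) (g f fbar A : fps K) :
  riordan g f -> comp_inverse f fbar -> A_seq f A ->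
  let eq1 := fun B : fps K =>
    f = fps_add (fps_X K)
          (fps_mul (fps_mul (fps_X K) f) (fps_comp B (fps_mul (fps_X K) f))) in
  let eq2 := fun B : fps K =>
    fps_X K = fps_add fbar
          (fps_mul (fps_mul (fps_X K) fbar) (fps_comp B (fps_mul (fps_X K) fbar))) in
  let eq3 := fun B : fps K =>
    A = fps_add (fps_one K)
          (fps_mul (fps_X K)
             (fps_comp B (fps_mul (fps_mul (fps_X K) (fps_X K)) (fps_inv A)))) in
  (forall b : fps K, typeI_Bseq g f b -> [/\ eq1 b, eq2 b & eq3 b]) /\
  (forall B : fps K, (eq1 B <-> eq2 B) /\ (eq2 B <-> eq3 B)).
Proof.
move=> [g0 [f0 f1]] f_fbar fA eq1 eq2 eq3.
have eq2E B : eq2 B = B_equation B (fps_X K) fbar.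
  by rewrite /eq2 /B_equation (fps_mulC fbar).
have eq12 B : eq1 B <-> eq2 B.
  by rewrite eq2E; exact: B_equation_comp_inverse f0 f_fbar.
have eq23 B : eq2 B <-> eq3 B.
  by rewrite eq2E; exact: B_equation_A_seq f0 f1 f_fbar fA.
split=> [b /(typeI_Bseq_B_equation g0 f0) eq1b | B]; last by split.
by split=> //; [apply/eq12 | apply/eq23/eq12].
Qed.
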